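(* Let $v,\rho\in\mathbb{N}^+$, let $\boldsymbol\alpha=(\alpha,\dots,\alpha)\in\mathbb{N}^{v+1}$ with $\alpha\ge1$ (non-informative prior), and let $R$ be a symmetric, bounded, strictly proper scoring rule on outcomes $\{0,\dots,v\}$. Fix a reviewer $i$ with observed signals $\mathbf{t}_i=(t_{i,1},\dots,t_{i,\rho})\in\{0,\dots,v\}^\rho$ and true posterior predictive distribution $\boldsymbol\theta=\mathbf{p}^{(\rho)}(\mathbf{t}_i)$, and suppose $\mathbf{t}_i$ has a unique mode $z$, i.e. $\#\{m:t_{i,m}=z\}>\#\{m:t_{i,m}=y\}$ for all $y\ne z$. The reviewer reports a single value $r\in\{0,\dots,v\}$ and is scored by $\sum_{j\ne i}(\gamma R(\mathbf{p}(r),r_j)+\lambda)$ with $\gamma>0,\lambda\in\mathbb{R}$; his expected score is $$S_i(r)=\sum_{j\neq i}\sum_{e=0}^v\theta_e\big(\gamma R(\mathbf{p}(r),e)+\lambda\big).$$ Then $S_i(r)$ is strictly maximized over $r\in\{0,\dots,v\}$ if and only if $r=z$.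
   Context: For $x\in\{0,\dots,v\}$, $\mathbf{p}(x)$ is the probability vector with $p_k(x)=\frac{\alpha_k+1}{1+\sum_m\alpha_m}$ if $k=x$ and $\frac{\alpha_k}{1+\sum_m\alpha_m}$ otherwise. For $\mathbf{x}\in\{0,\dots,v\}^\rho$, $\mathbf{p}^{(\rho)}(\mathbf{x})$ has entries $p^{(\rho)}_k(\mathbf{x})=\frac{\alpha_k+\#\{m:x_m=k\}}{\rho+\sum_l\alpha_l}$. A scoring rule $R(\mathbf{z},e)$ is strictly proper if $\sum_eq_eR(\mathbf{z},e)$ is uniquely maximized at $\mathbf{z}=\mathbf{q}$ for every probability vector $\mathbf{q}$; symmetric if its value is invariant under simultaneously permuting the entries of $\mathbf{z}$ and relabeling the outcome $e$ accordingly; bounded if it is always finite. *)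

From HB Require Import structures.
From mathcomp Require Import all_boot all_order all_algebra all_fingroup.
Set Implicit Arguments. Unset Strict Implicit. Unset Printing Implicit Defensive.
Import Order.TTheory GRing.Theory Num.Theory.
Local Open Scope ring_scope.

Definition prob_vec (F : realFieldType) (v : nat) (q : {ffun 'I_v.+1 -> F}) : Prop :=
  (forall k, 0 <= q k) /\ \sum_k q k = 1.

Definition scoring_rule (F : realFieldType) (v : nat) :=
  {ffun 'I_v.+1 -> F} -> 'I_v.+1 -> F.

Definition exp_score (F : realFieldType) (v : nat) (Rs : scoring_rule F v)
  (z q : {ffun 'I_v.+1 -> F}) : F := \sum_e q e * Rs z e.

Definition strictly_proper (F : realFieldType) (v : nat) (Rs : scoring_rule F v) : Prop :=
  forall q z, prob_vec q -> prob_vec z -> z != q ->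
    exp_score Rs z q < exp_score Rs q q.

Definition symmetric_rule (F : realFieldType) (v : nat) (Rs : scoring_rule F v) : Prop :=
  forall (s : 'S_v.+1) (z : {ffun 'I_v.+1 -> F}) (e : 'I_v.+1),
    Rs [ffun k => z (s k)] e = Rs z (s e).

Definition p_one (F : realFieldType) (v : nat) (alpha : 'I_v.+1 -> nat) (x : 'I_v.+1)
  : {ffun 'I_v.+1 -> F} :=
  [ffun k => ((alpha k + (k == x))%N)%:R / (1 + (\sum_m alpha m)%N%:R)].

Definition p_rho (F : realFieldType) (v rho : nat) (alpha : 'I_v.+1 -> nat)
  (x : 'I_rho -> 'I_v.+1) : {ffun 'I_v.+1 -> F} :=
  [ffun k => ((alpha k + #|[pred m | x m == k]|)%N)%:R
              / (rho%:R + (\sum_l alpha l)%N%:R)].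

Definition expected_score (F : realFieldType) (v n : nat) (i : 'I_n)
  (alpha : 'I_v.+1 -> nat) (Rs : scoring_rule F v) (gamma lambda : F)
  (theta : {ffun 'I_v.+1 -> F}) (r : 'I_v.+1) : F :=
  \sum_(j < n | j != i) \sum_e theta e * (gamma * Rs (p_one F alpha r) e + lambda).

From HB Require Import structures.
From mathcomp Require Import all_boot all_order all_algebra all_fingroup.
From mathcomp Require Import ring.
Set Implicit Arguments. Unset Strict Implicit. Unset Printing Implicit Defensive.
Import Order.TTheory GRing.Theory Num.Theory.
Local Open Scope ring_scope.

(* With a uniform prior, the report distributions p(y) and p(z)
   differ only by the transposition (y z) of outcomes, so for a symmetric rule
   R and any weight vector q,
     E_q[R(p(y),.)] - E_q[R(p(z),.)] = -(q_z - q_y) (R(p(z),z) - R(p(z),y)).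
   Taking q = p(z) and using strict properness shows R(p(z),z) > R(p(z),y):
   a symmetric strictly proper rule rewards the outcome that its report
   favours.  Hence reporting z beats reporting y against every q with
   q_z > q_y, in particular against the posterior theta = p^(rho)(t), whose
   largest entry sits at the unique mode z of t.  The expected score S_i(r)
   sums (over the n-1 >= 1 other reviewers) an increasing affine image of this
   single-opponent score, so z is the strict maximiser of S_i, and a strict
   maximiser of a function is unique. *)

Lemma strict_argmax_unique (T : eqType) (F : realFieldType) (f : T -> F) (z : T) :
  (forall y, y != z -> f y < f z) ->
  forall r, (forall y, y != r -> f y < f r) <-> r = z.
Proof.
move=> zmax r; split => [rmax|-> //].
apply/eqP; apply/negP => /negP rz.
have zr : z != r by rewrite eq_sym.
by have := lt_trans (rmax z zr) (zmax r rz); rewrite ltxx.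
Qed.

Section TranspositionSums.
Variables (F : realFieldType) (v : nat).

Lemma sum_tperm_diff (q f : 'I_v.+1 -> F) (y z : 'I_v.+1) : y != z ->
  \sum_e q e * f e - \sum_e q (tperm y z e) * f e = (q z - q y) * (f z - f y).
Proof.
move=> yz; rewrite -sumrB (bigD1 z) //= (bigD1 y) //= big1; last first.
  by move=> e /andP[ez ey]; rewrite tpermD 1?eq_sym // subrr.
by rewrite tpermR tpermL addr0; ring.
Qed.

Lemma sum_perm_involutive (q f : 'I_v.+1 -> F) (s : 'S_v.+1) :
  involutive s -> \sum_e q e * f (s e) = \sum_e q (s e) * f e.
Proof.
move=> sK; rewrite (reindex_inj (@perm_inj _ s)) /=.
by apply: eq_bigr => e _; rewrite sK.
Qed.

End TranspositionSums.

Section UniformPrior.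
Variables (F : realFieldType) (v : nat) (alpha : nat).

Let p (x : 'I_v.+1) : {ffun 'I_v.+1 -> F} := p_one F (fun _ => alpha) x.
Let D : F := 1 + (\sum_(m < v.+1) alpha)%N%:R.

Lemma normalizer_gt0 : 0 < D.
Proof. by rewrite ltr_pwDl ?ler0n. Qed.

Lemma p_one_tperm (y z : 'I_v.+1) : p y = [ffun k => p z (tperm y z k)].
Proof.
apply/ffunP => k; rewrite !ffunE; congr (((alpha + _)%N)%:R / _).
case: (tpermP y z k) => [->|->|/eqP ky /eqP kz]; rewrite ?eqxx //.
  by case: eqP => [->|/eqP/negbTE]; rewrite ?eqxx // eq_sym => ->.
by rewrite (negbTE ky) (negbTE kz).
Qed.

Lemma p_one_prob (x : 'I_v.+1) : prob_vec (p x).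
Proof.
split => [k|]; first by rewrite ffunE divr_ge0 ?ler0n // ltW ?normalizer_gt0.
rewrite (eq_bigr (fun k => ((alpha + (k == x))%N)%:R * D^-1));
  last by move=> k _; rewrite ffunE.
have one_hit : (\sum_(k < v.+1) (k == x))%N = 1%N.
  by rewrite (bigD1 x) //= big1 => [|k /negbTE -> //]; rewrite eqxx.
rewrite -mulr_suml -natr_sum big_split /= one_hit natrD addrC.
by rewrite divff // gt_eqF ?normalizer_gt0.
Qed.

Lemma p_one_gap (y z : 'I_v.+1) : y != z -> p z z - p z y = D^-1.
Proof.
move=> yz; rewrite !ffunE eqxx (negbTE yz) addn0 -mulrBl natrD.
by rewrite addrC addKr mul1r.
Qed.

(* Distinct reports give distinct distributions (they differ at z), which is
   what lets strict properness compare them. *)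
Lemma p_one_inj (y z : 'I_v.+1) : y != z -> p y != p z.
Proof.
move=> yz; apply/eqP => /(congr1 (fun f : {ffun 'I_v.+1 -> F} => f z)).
have Dinv_neq0 : D^-1 != 0 by rewrite invr_eq0 gt_eqF ?normalizer_gt0.
rewrite !ffunE eqxx eq_sym (negbTE yz) => /(mulIf Dinv_neq0).
by move/eqP; rewrite eqr_nat addn0 addn1 (ltn_eqF (ltnSn _)).
Qed.

Section SymmetricRule.
Variable Rs : scoring_rule F v.
Hypothesis Rsym : symmetric_rule Rs.

Lemma exp_score_report_change (q : {ffun 'I_v.+1 -> F}) (y z : 'I_v.+1) :
  y != z ->
  exp_score Rs (p y) q - exp_score Rs (p z) q
  = - ((q z - q y) * (Rs (p z) z - Rs (p z) y)).
Proof.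
move=> yz; rewrite /exp_score {1}(p_one_tperm y z).
under eq_bigr => e _ do rewrite (Rsym (tperm y z) (p z) e).
rewrite sum_perm_involutive; last exact: tpermK.
by rewrite -(sum_tperm_diff q (Rs (p z)) yz) opprB.
Qed.

Hypothesis Rproper : strictly_proper Rs.

Lemma proper_rewards_mode (y z : 'I_v.+1) : y != z ->
  Rs (p z) y < Rs (p z) z.
Proof.
move=> yz; have := Rproper (p_one_prob z) (p_one_prob y) (p_one_inj yz).
rewrite -subr_gt0 -opprB exp_score_report_change // opprK p_one_gap //.
by rewrite pmulr_rgt0 ?subr_gt0 // invr_gt0 normalizer_gt0.
Qed.

Lemma exp_score_report_lt (q : {ffun 'I_v.+1 -> F}) (y z : 'I_v.+1) :
  y != z -> q y < q z -> exp_score Rs (p y) q < exp_score Rs (p z) q.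
Proof.
move=> yz qyz; rewrite -subr_lt0 exp_score_report_change // oppr_lt0.
by rewrite pmulr_rgt0 subr_gt0 // proper_rewards_mode.
Qed.

End SymmetricRule.
End UniformPrior.

Lemma p_rho_count_lt (F : realFieldType) (v rho alpha : nat)
  (t : 'I_rho -> 'I_v.+1) (y z : 'I_v.+1) : (0 < rho)%N ->
  (#|[pred m | t m == y]| < #|[pred m | t m == z]|)%N ->
  p_rho F (fun _ => alpha) t y < p_rho F (fun _ => alpha) t z.
Proof.
move=> rho0 cyz; rewrite !ffunE ltr_pM2r ?ltr_nat ?ltn_add2l //.
by rewrite invr_gt0 ltr_wpDr ?ler0n // ltr0n.
Qed.

Lemma expected_score_lt (F : realFieldType) (v n : nat) (i : 'I_n)
  (alpha : 'I_v.+1 -> nat) (Rs : scoring_rule F v) (gamma lambda : F)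
  (theta : {ffun 'I_v.+1 -> F}) (y z : 'I_v.+1) :
  (exists j : 'I_n, j != i) -> 0 < gamma ->
  exp_score Rs (p_one F alpha y) theta < exp_score Rs (p_one F alpha z) theta ->
  expected_score i alpha Rs gamma lambda theta y
  < expected_score i alpha Rs gamma lambda theta z.
Proof.
move=> [j ji] g0 lt_yz; apply: ltr_sum.
  by apply/hasP; exists j; rewrite ?mem_index_enum.
move=> k _; rewrite -subr_gt0 -sumrB.
rewrite (eq_bigr (fun e => gamma * (theta e * Rs (p_one F alpha z) e
                              - theta e * Rs (p_one F alpha y) e)));
  last by move=> e _; ring.
by rewrite -mulr_sumr sumrB pmulr_rgt0 // subr_gt0.
Qed.

Lemma exists_peer (n : nat) (i : 'I_n) : (1 < n)%N -> exists j : 'I_n, j != i.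
Proof.
move=> n1; have [->|/eqP ni] := i =P Ordinal n1.
  by exists (Ordinal (ltnW n1)).
by exists (Ordinal n1); rewrite eq_sym.
Qed.

Theorem proposition4 (F : realFieldType) (v rho n : nat) (alpha : nat)
  (Rs : scoring_rule F v) (gamma lambda : F) (i : 'I_n)
  (t : 'I_rho -> 'I_v.+1) (z : 'I_v.+1) :
  (0 < v)%N -> (0 < rho)%N -> (1 < n)%N -> (1 <= alpha)%N ->
  symmetric_rule Rs -> strictly_proper Rs ->
  0 < gamma ->
  (forall y : 'I_v.+1, y != z ->
     (#|[pred m | t m == y]| < #|[pred m | t m == z]|)%N) ->
  forall r : 'I_v.+1,
    (forall y : 'I_v.+1, y != r ->
       expected_score i (fun _ => alpha) Rs gamma lambda
         (p_rho F (fun _ => alpha) t) y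
       < expected_score i (fun _ => alpha) Rs gamma lambda
         (p_rho F (fun _ => alpha) t) r)
    <-> r = z.
Proof.
move=> _ rho0 n1 _ Rsym Rproper g0 mode.
apply: strict_argmax_unique => y yz.
apply: expected_score_lt; [exact: exists_peer | exact: g0 |].
apply: exp_score_report_lt => //.
exact: p_rho_count_lt (mode y yz).
Qed.
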